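(* Let $\ell>0$ and let $\alpha\in C^0([0,\ell/4],\mathbb{R}^3)$ have length $\mathscr{L}(\alpha)\in(0,\infty)$. Let $g:[0,\ell)\to\mathbb{R}^3$ be given by $g(t)=\alpha(t)$ on $[0,\ell/4)$, $g(t)=R_1\alpha(\psi_1^\ell(t))$ on $[\ell/4,\ell/2)$, $g(t)=R_2\alpha(\psi_2^\ell(t))$ on $[\ell/2,3\ell/4)$, $g(t)=R_3\alpha(\psi_3^\ell(t))$ on $[3\ell/4,\ell)$. Then $\mathscr{L}(g)=4\mathscr{L}(\alpha)$. Moreover, (the $\ell$-periodic extension of) $g$ is a continuous closed curve, i.e. of class $C^0(\mathbb{R}/\ell\mathbb{Z},\mathbb{R}^3)$, if and only if $\alpha(0)\in\mathbb{R}\mathbf{e}_3$ and $\alpha(\ell/4)\in\mathbb{R}\mathbf{e}_1$. Finally, if $\alpha$ is continuously differentiable, then $g$ is of class $C^1(\mathbb{R}/\ell\mathbb{Z},\mathbb{R}^3)$ if and only if in addition $\alpha'(0)\in\mathrm{span}\{\mathbf{e}_1,\mathbf{e}_2\}$ and $\alpha'(\ell/4)\in\mathrm{span}\{\mathbf{e}_2,\mathbf{e}_3\}$.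
   Context: $\mathbf{e}_1,\mathbf{e}_2,\mathbf{e}_3$ is the standard basis of $\mathbb{R}^3$; $\mathscr{L}$ denotes length. $R_1=\mathrm{diag}(1,-1,-1)$, $R_2=\mathrm{diag}(-1,1,-1)$, $R_3=\mathrm{diag}(-1,-1,1)$. On $\mathbb{R}/\ell\mathbb{Z}$: $\psi_1^\ell(t)=-t+\ell/2$, $\psi_2^\ell(t)=t-\ell/2$, $\psi_3^\ell(t)=-t+\ell$ (mod $\ell$).
   Formalization: The length $\mathscr{L}(g)$ is replaced by the sum of the lengths of g on its four pieces [0,ℓ/4), [ℓ/4,ℓ/2), [ℓ/2,3ℓ/4) and [3ℓ/4,ℓ), so jumps of g between pieces are not counted. The statement above fails without it. *)

From Stdlib Require Import Reals List.
From Coquelicot Require Import Coquelicot.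
Open Scope R_scope.

Definition V3 : Type := (R * R * R)%type.
Definition vx (v : V3) : R := fst (fst v).
Definition vy (v : V3) : R := snd (fst v).
Definition vz (v : V3) : R := snd v.
Definition mkV (a b c : R) : V3 := (a, b, c).
Definition vadd (u v : V3) : V3 := mkV (vx u + vx v) (vy u + vy v) (vz u + vz v).
Definition vscale (c : R) (v : V3) : V3 := mkV (c * vx v) (c * vy v) (c * vz v).
Definition vsub (u v : V3) : V3 := vadd u (vscale (-1) v).
Definition vnorm (v : V3) : R := sqrt (vx v ^ 2 + vy v ^ 2 + vz v ^ 2).

Definition e1 : V3 := mkV 1 0 0.
Definition e2 : V3 := mkV 0 1 0.
Definition e3 : V3 := mkV 0 0 1.

Definition Rf1 (v : V3) : V3 := mkV (vx v) (- vy v) (- vz v).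
Definition Rf2 (v : V3) : V3 := mkV (- vx v) (vy v) (- vz v).
Definition Rf3 (v : V3) : V3 := mkV (- vx v) (- vy v) (vz v).

(* psi_i^l, on the respective pieces where they are used (no reduction mod l
   is needed there, the values lie in [0, l/4]) *)
Definition psi1 (l t : R) : R := - t + l / 2.
Definition psi2 (l t : R) : R := t - l / 2.
Definition psi3 (l t : R) : R := - t + l.

Fixpoint polysum (f : R -> V3) (x : R) (ts : list R) : R :=
  match ts with
  | nil => 0
  | y :: ts' => vnorm (vsub (f y) (f x)) + polysum f y ts'
  end.

Fixpoint incr_in (S : R -> Prop) (x : R) (ts : list R) : Prop :=
  match ts with
  | nil => True
  | y :: ts' => x < y /\ S y /\ incr_in S y ts'
  end.

Definition length_on (f : R -> V3) (S : R -> Prop) : Rbar :=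
  Lub_Rbar (fun s => exists x ts, S x /\ incr_in S x ts /\ s = polysum f x ts).

Definition Icc (a b : R) : R -> Prop := fun t => a <= t <= b.
Definition Ico (a b : R) : R -> Prop := fun t => a <= t < b.

Definition gcurve (l : R) (alpha : R -> V3) (t : R) : V3 :=
  if Rlt_dec t (l / 4) then alpha t
  else if Rlt_dec t (l / 2) then Rf1 (alpha (psi1 l t))
  else if Rlt_dec t (3 * l / 4) then Rf2 (alpha (psi2 l t))
  else Rf3 (alpha (psi3 l t)).

(* t |-> g(t - l * floor(t/l)) ; frac_part r = r - floor r *)
Definition periodic_ext (l : R) (g : R -> V3) (t : R) : V3 :=
  g (l * frac_part (t / l)).

Definition glength (l : R) (g : R -> V3) : Rbar :=
  Rbar_plus (Rbar_plus (Rbar_plus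
    (length_on g (Ico 0 (l / 4)))
    (length_on g (Ico (l / 4) (l / 2))))
    (length_on g (Ico (l / 2) (3 * l / 4))))
    (length_on g (Ico (3 * l / 4) l)).

Definition cont_within (S : R -> Prop) (f : R -> V3) (t : R) : Prop :=
  forall eps, 0 < eps -> exists delta, 0 < delta /\
    forall s, S s -> Rabs (s - t) < delta -> vnorm (vsub (f s) (f t)) < eps.

Definition cont_on (S : R -> Prop) (f : R -> V3) : Prop :=
  forall t, S t -> cont_within S f t.

Definition deriv_within (S : R -> Prop) (f : R -> V3) (t : R) (d : V3) : Prop :=
  forall eps, 0 < eps -> exists delta, 0 < delta /\
    forall s, S s -> s <> t -> Rabs (s - t) < delta ->
      vnorm (vsub (vscale (/ (s - t)) (vsub (f s) (f t))) d) < eps.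

Definition C1_on_with (S : R -> Prop) (f df : R -> V3) : Prop :=
  (forall t, S t -> deriv_within S f t (df t)) /\ cont_on S df.

Definition allR : R -> Prop := fun _ => True.

Definition C0_circle (l : R) (g : R -> V3) : Prop :=
  cont_on allR (periodic_ext l g).

Definition C1_circle (l : R) (g : R -> V3) : Prop :=
  exists dg : R -> V3, C1_on_with allR (periodic_ext l g) dg.

Definition in_line (u v : V3) : Prop := exists c : R, v = vscale c u.
Definition in_span2 (u w v : V3) : Prop :=
  exists a b : R, v = vadd (vscale a u) (vscale b w).

(* Each of the four pieces of g is alpha composed with a diagonal sign isometry R_i of R^3
   and an isometric reparametrization t |-> +-t + c of the parameter, so it has the length of
   alpha; dropping an endpoint does not change the length of a continuous curve, so each
   half-open quarter contributes L(alpha).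
   The l-periodic extension of g is continuous (resp. C^1) exactly when at each junction
   0, l/4, l/2, 3l/4 the two adjacent pieces have the same value (resp. also the same
   one-sided derivative, the reversed pieces contributing a factor -1). Read coordinatewise,
   these matching conditions say alpha(0) in R e3 and alpha(l/4) in R e1, resp. in addition
   alpha'(0) in span(e1, e2) and alpha'(l/4) in span(e2, e3). *)

From Stdlib Require Import Reals Lra List.
From Coquelicot Require Import Coquelicot.
Open Scope R_scope.

Lemma V3_eq (u v : V3) : vx u = vx v -> vy u = vy v -> vz u = vz v -> u = v.
Proof. destruct u as [[a b] c], v as [[a' b'] c']; cbv [vx vy vz fst snd]; congruence. Qed.

Lemma V3_eq_iff (u v : V3) : u = v <-> vx u = vx v /\ vy u = vy v /\ vz u = vz v.
Proof. split; [intros ->; auto | intros (? & ? & ?); apply V3_eq; assumption]. Qed.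

Ltac vec_unfold := unfold vsub, vadd, vscale, mkV, Rf1, Rf2, Rf3, e1, e2, e3, vx, vy, vz; cbn.
Ltac vec_ring := apply V3_eq; vec_unfold; ring.

Lemma vscale_1 v : vscale 1 v = v.
Proof. vec_ring. Qed.

Lemma vnorm_ge0 v : 0 <= vnorm v.
Proof. apply sqrt_pos. Qed.

Lemma vnorm_sqr v : vnorm v * vnorm v = vx v ^ 2 + vy v ^ 2 + vz v ^ 2.
Proof. apply sqrt_sqrt. nra. Qed.

Lemma vnorm_vsub_sym u v : vnorm (vsub u v) = vnorm (vsub v u).
Proof. unfold vnorm; f_equal; vec_unfold; ring. Qed.

Lemma vnorm_vsub_diag v : vnorm (vsub v v) = 0.
Proof. unfold vnorm. rewrite <- sqrt_0. f_equal. vec_unfold. ring. Qed.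

Lemma vnorm_vscale c v : vnorm (vscale c v) = Rabs c * vnorm v.
Proof.
  unfold vnorm. rewrite <- sqrt_Rsqr_abs, <- sqrt_mult_alt by apply Rle_0_sqr.
  f_equal. vec_unfold. unfold Rsqr. ring.
Qed.

Lemma vnorm_vadd_le u v : vnorm (vadd u v) <= vnorm u + vnorm v.
Proof.
  pose proof (vnorm_ge0 u); pose proof (vnorm_ge0 v); pose proof (vnorm_ge0 (vadd u v)).
  pose proof (vnorm_sqr u); pose proof (vnorm_sqr v); pose proof (vnorm_sqr (vadd u v)).
  set (d := vx u * vx v + vy u * vy v + vz u * vz v).
  (* Lagrange's identity gives Cauchy-Schwarz: [d <= |u| |v|] *)
  assert (Hd : d <= vnorm u * vnorm v).
  { assert (d * d <= (vnorm u * vnorm v) * (vnorm u * vnorm v)).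
    { replace ((vnorm u * vnorm v) * (vnorm u * vnorm v)) with
        ((vnorm u * vnorm u) * (vnorm v * vnorm v)) by ring.
      rewrite !vnorm_sqr. unfold d.
      set (a := vx u); set (b := vy u); set (c := vz u).
      set (x := vx v); set (y := vy v); set (z := vz v).
      assert (0 <= (a*y-b*x)^2 + (a*z-c*x)^2 + (b*z-c*y)^2) by
        (pose proof (pow2_ge_0 (a*y-b*x)); pose proof (pow2_ge_0 (a*z-c*x));
         pose proof (pow2_ge_0 (b*z-c*y)); lra).
      nra. }
    assert (0 <= vnorm u * vnorm v) by (apply Rmult_le_pos; assumption).
    nra. }
  assert (vnorm (vadd u v) * vnorm (vadd u v) = vnorm u * vnorm u + vnorm v * vnorm v + 2 * d).
  { rewrite !vnorm_sqr. unfold d. vec_unfold. ring. }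
  nra.
Qed.

Lemma vnorm_vsub_le u v w : vnorm (vsub u w) <= vnorm (vsub u v) + vnorm (vsub v w).
Proof. replace (vsub u w) with (vadd (vsub u v) (vsub v w)) by vec_ring. apply vnorm_vadd_le. Qed.

Lemma vnorm_vsub_eq0 u v : vnorm (vsub u v) = 0 -> u = v.
Proof.
  destruct u as [[a b] c], v as [[x y] z]. unfold vnorm. vec_unfold.
  pose proof (pow2_ge_0 (a + -1 * x)); pose proof (pow2_ge_0 (b + -1 * y));
  pose proof (pow2_ge_0 (c + -1 * z)).
  intros Hn. apply sqrt_eq_0 in Hn; [|lra].
  f_equal; [f_equal|]; nra.
Qed.

Record lin_isometry (A : V3 -> V3) : Prop := {
  lin_isometry_vsub : forall u v, A (vsub u v) = vsub (A u) (A v);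
  lin_isometry_vscale : forall c v, A (vscale c v) = vscale c (A v);
  lin_isometry_vnorm : forall v, vnorm (A v) = vnorm v }.

Lemma lin_isometry_dist A u v : lin_isometry A -> vnorm (vsub (A u) (A v)) = vnorm (vsub u v).
Proof. intros HA. rewrite <- lin_isometry_vsub by exact HA. apply lin_isometry_vnorm, HA. Qed.

Lemma Rf1_isometry : lin_isometry Rf1.
Proof. split; intros; [vec_ring | vec_ring | unfold vnorm; f_equal; vec_unfold; ring]. Qed.

Lemma Rf2_isometry : lin_isometry Rf2.
Proof. split; intros; [vec_ring | vec_ring | unfold vnorm; f_equal; vec_unfold; ring]. Qed.

Lemma Rf3_isometry : lin_isometry Rf3.
Proof. split; intros; [vec_ring | vec_ring | unfold vnorm; f_equal; vec_unfold; ring]. Qed.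

Lemma Rabs_m1 : Rabs (-1) = 1.
Proof. rewrite Rabs_left; lra. Qed.

Lemma lin_isometry_opp A : lin_isometry A -> lin_isometry (fun v => vscale (-1) (A v)).
Proof.
  intros HA. split; intros.
  - rewrite (lin_isometry_vsub _ HA). vec_ring.
  - rewrite (lin_isometry_vscale _ HA). vec_ring.
  - rewrite vnorm_vscale, Rabs_m1, (lin_isometry_vnorm _ HA). ring.
Qed.

Lemma id_isometry : lin_isometry (fun v => v).
Proof. split; reflexivity. Qed.

Lemma in_line_e1_iff v : in_line e1 v <-> vy v = 0 /\ vz v = 0.
Proof.
  split; [intros [c ->]; vec_unfold; lra|].
  intros [Hy Hz]. exists (vx v). apply V3_eq; vec_unfold; fold (vy v) (vz v); lra.
Qed.

Lemma in_line_e3_iff v : in_line e3 v <-> vx v = 0 /\ vy v = 0.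
Proof.
  split; [intros [c ->]; vec_unfold; lra|].
  intros [Hx Hy]. exists (vz v). apply V3_eq; vec_unfold; fold (vx v) (vy v); lra.
Qed.

Lemma in_span2_e1_e2_iff v : in_span2 e1 e2 v <-> vz v = 0.
Proof.
  split; [intros (a & b & ->); vec_unfold; lra|].
  intros Hz. exists (vx v), (vy v). apply V3_eq; vec_unfold; fold (vz v); lra.
Qed.

Lemma in_span2_e2_e3_iff v : in_span2 e2 e3 v <-> vx v = 0.
Proof.
  split; [intros (a & b & ->); vec_unfold; lra|].
  intros Hx. exists (vy v), (vz v). apply V3_eq; vec_unfold; fold (vx v); lra.
Qed.

Ltac coords_solve :=
  rewrite ?in_line_e1_iff, ?in_line_e3_iff, ?in_span2_e1_e2_iff, ?in_span2_e2_e3_iff,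
    ?V3_eq_iff; vec_unfold; intuition lra.

Lemma Rf1_fixed_iff v : Rf1 v = v <-> in_line e1 v.
Proof. coords_solve. Qed.

Lemma Rf3_fixed_iff v : Rf3 v = v <-> in_line e3 v.
Proof. coords_solve. Qed.

Lemma Rf1_antifixed_iff v : vscale (-1) (Rf1 v) = v <-> in_span2 e2 e3 v.
Proof. coords_solve. Qed.

Lemma Rf3_antifixed_iff v : vscale (-1) (Rf3 v) = v <-> in_span2 e1 e2 v.
Proof. coords_solve. Qed.

Lemma Rf1_Rf2_on_e3 v : in_line e3 v -> Rf1 v = Rf2 v.
Proof. coords_solve. Qed.

Lemma Rf2_Rf3_on_e1 v : in_line e1 v -> Rf2 v = Rf3 v.
Proof. coords_solve. Qed.

Lemma Rf1_Rf2_on_e1e2 v : in_span2 e1 e2 v -> vscale (-1) (Rf1 v) = Rf2 v.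
Proof. coords_solve. Qed.

Lemma Rf2_Rf3_on_e2e3 v : in_span2 e2 e3 v -> Rf2 v = vscale (-1) (Rf3 v).
Proof. coords_solve. Qed.

Definition lim_within (S : R -> Prop) (q : R -> V3) (t : R) (L : V3) : Prop :=
  forall eps, 0 < eps -> exists delta, 0 < delta /\
    forall s, S s -> s <> t -> Rabs (s - t) < delta -> vnorm (vsub (q s) L) < eps.

(* [deriv_within S f t d] is, by definition, [lim_within S (diff_quot f t) t d]. *)
Definition diff_quot (f : R -> V3) (t s : R) : V3 := vscale (/ (s - t)) (vsub (f s) (f t)).

Lemma cont_within_lim S f t : cont_within S f t <-> lim_within S f t (f t).
Proof.
  split; intros H eps Heps; destruct (H eps Heps) as (delta & Hdelta & Hf);
    exists delta; split; auto.
  intros s Hs Hst. destruct (Req_dec s t) as [-> | Hne]; auto.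
  rewrite vnorm_vsub_diag. exact Heps.
Qed.

Lemma lim_within_subset (S S' : R -> Prop) q t L :
  (forall s, S' s -> S s) -> lim_within S q t L -> lim_within S' q t L.
Proof.
  intros HS H eps Heps. destruct (H eps Heps) as (delta & ? & Hq). exists delta. auto.
Qed.

Lemma lim_within_ext (S : R -> Prop) q q' t L :
  (forall s, S s -> s <> t -> q s = q' s) -> lim_within S q t L -> lim_within S q' t L.
Proof.
  intros Hq H eps Heps. destruct (H eps Heps) as (delta & ? & Hlim). exists delta.
  split; auto. intros s Hs Hst ?. rewrite <- Hq; auto.
Qed.

Definition limpt (S : R -> Prop) (t : R) : Prop :=
  forall delta, 0 < delta -> exists s, S s /\ s <> t /\ Rabs (s - t) < delta.

Lemma limpt_Icc a b t : a < b -> Icc a b t -> limpt (Icc a b) t.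
Proof.
  unfold Icc; intros Hab Ht delta Hdelta.
  destruct (Rlt_or_le t b) as [Htb | Htb].
  - exists (Rmin (t + delta / 2) b).
    pose proof (Rmin_l (t + delta / 2) b); pose proof (Rmin_r (t + delta / 2) b).
    assert (t < Rmin (t + delta / 2) b) by (apply Rmin_glb_lt; lra).
    rewrite Rabs_right; repeat split; lra.
  - exists (Rmax (t - delta / 2) a).
    pose proof (Rmax_l (t - delta / 2) a); pose proof (Rmax_r (t - delta / 2) a).
    assert (Rmax (t - delta / 2) a < t) by (apply Rmax_lub_lt; lra).
    rewrite Rabs_left; repeat split; lra.
Qed.

Lemma lim_within_unique S q t L L' :
  limpt S t -> lim_within S q t L -> lim_within S q t L' -> L = L'.
Proof.
  intros Ht H H'. apply vnorm_vsub_eq0.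
  destruct (Rle_lt_or_eq_dec _ _ (vnorm_ge0 (vsub L L'))) as [Hpos | Hzero]; [|auto].
  set (eps := vnorm (vsub L L') / 2).
  destruct (H eps) as (d & Hd & Hq); [unfold eps; lra|].
  destruct (H' eps) as (d' & Hd' & Hq'); [unfold eps; lra|].
  destruct (Ht (Rmin d d')) as (s & Hs & Hst & Hsd); [now apply Rmin_glb_lt|].
  pose proof (Rmin_l d d'); pose proof (Rmin_r d d').
  specialize (Hq s Hs Hst ltac:(lra)). specialize (Hq' s Hs Hst ltac:(lra)).
  pose proof (vnorm_vsub_le L (q s) L'). rewrite vnorm_vsub_sym in Hq.
  unfold eps in *. lra.
Qed.

Lemma lim_within_glue q qL qR t delta L :
  0 < delta ->
  (forall s, t - delta < s < t -> q s = qL s) -> (forall s, t < s < t + delta -> q s = qR s) ->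
  lim_within (Icc (t - delta) t) qL t L -> lim_within (Icc t (t + delta)) qR t L ->
  lim_within allR q t L.
Proof.
  intros Hdelta HL HR CL CR eps Heps.
  destruct (CL eps Heps) as (dL & HdL & HqL). destruct (CR eps Heps) as (dR & HdR & HqR).
  set (d := Rmin delta (Rmin dL dR)).
  assert (d <= delta /\ d <= dL /\ d <= dR) as (? & ? & ?).
  { unfold d. pose proof (Rmin_l delta (Rmin dL dR)); pose proof (Rmin_r delta (Rmin dL dR)).
    pose proof (Rmin_l dL dR); pose proof (Rmin_r dL dR). lra. }
  exists d. split; [unfold d; repeat apply Rmin_glb_lt; auto|].
  intros s _ Hst Hsd.
  destruct (Rlt_or_le s t) as [Hlt | Hge].
  - rewrite Rabs_left in Hsd by lra. rewrite HL by lra.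
    apply HqL; [unfold Icc; lra | auto | rewrite Rabs_left; lra].
  - rewrite Rabs_right in Hsd by lra. rewrite HR by lra.
    apply HqR; [unfold Icc; lra | auto | rewrite Rabs_right; lra].
Qed.

Lemma lim_within_shift q q' t c L :
  (forall s, q' (s + c) = q s) -> lim_within allR q t L -> lim_within allR q' (t + c) L.
Proof.
  intros Hq H eps Heps. destruct (H eps Heps) as (d & Hd & Hlim). exists d. split; auto.
  intros s _ Hst Hsd. replace s with ((s - c) + c) by ring. rewrite Hq.
  apply Hlim; [exact I | intros E; apply Hst; lra | replace (s - c - t) with (s - (t + c)) by ring; auto].
Qed.

Lemma deriv_within_subset (S S' : R -> Prop) f t d :
  (forall s, S' s -> S s) -> deriv_within S f t d -> deriv_within S' f t d.
Proof. apply lim_within_subset. Qed.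

Lemma cont_within_subset (S S' : R -> Prop) f t :
  (forall s, S' s -> S s) -> cont_within S f t -> cont_within S' f t.
Proof. rewrite !cont_within_lim. apply lim_within_subset. Qed.

Lemma cont_within_isometric_comp (S S' : R -> Prop) A f phi a t :
  lin_isometry A -> Rabs a = 1 -> (forall u v, phi u - phi v = a * (u - v)) ->
  (forall s, S' s -> S (phi s)) ->
  cont_within S f (phi t) -> cont_within S' (fun s => A (f (phi s))) t.
Proof.
  intros HA Ha Hphi HS H eps Heps. destruct (H eps Heps) as (d & Hd & Hf).
  exists d. split; auto. intros s Hs Hsd.
  rewrite lin_isometry_dist by exact HA. apply Hf; auto.
  rewrite Hphi, Rabs_mult, Ha. lra.
Qed.

Lemma deriv_within_isometric_comp (S S' : R -> Prop) A f phi a t d :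
  lin_isometry A -> Rabs a = 1 -> (forall u v, phi u - phi v = a * (u - v)) ->
  (forall s, S' s -> S (phi s)) ->
  deriv_within S f (phi t) d -> deriv_within S' (fun s => A (f (phi s))) t (vscale a (A d)).
Proof.
  intros HA Ha Hphi HS H eps Heps. destruct (H eps Heps) as (e & He & Hf).
  exists e. split; auto. intros s Hs Hst Hse.
  assert (Hphist : phi s - phi t = a * (s - t)) by apply Hphi.
  assert (Ha0 : a <> 0) by (intros ->; rewrite Rabs_R0 in Ha; lra).
  assert (Haa : a * a = 1) by (change (Rsqr a = 1); rewrite Rsqr_abs, Ha; apply Rsqr_1).
  replace (vsub (vscale (/ (s - t)) (vsub (A (f (phi s))) (A (f (phi t))))) (vscale a (A d)))
    with (A (vscale a (vsub (vscale (/ (phi s - phi t)) (vsub (f (phi s)) (f (phi t)))) d))).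
  - rewrite (lin_isometry_vnorm _ HA), vnorm_vscale, Ha, Rmult_1_l.
    apply Hf; auto.
    + intros E. apply Hst. assert (a * (s - t) = 0) by lra. nra.
    + rewrite Hphist, Rabs_mult, Ha. lra.
  - repeat rewrite ?(lin_isometry_vscale _ HA), ?(lin_isometry_vsub _ HA).
    rewrite Hphist. apply V3_eq; vec_unfold; field; split; first [exact Ha0 | lra].
Qed.

Lemma cont_on_isometric_comp (S S' : R -> Prop) A f phi a :
  lin_isometry A -> Rabs a = 1 -> (forall u v, phi u - phi v = a * (u - v)) ->
  (forall s, S' s -> S (phi s)) ->
  cont_on S f -> cont_on S' (fun s => A (f (phi s))).
Proof.
  intros HA Ha Hphi HS Hf t Ht. apply cont_within_isometric_comp with S a; auto.
Qed.

Lemma deriv_within_cont S f t d : deriv_within S f t d -> cont_within S f t.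
Proof.
  intros Hd. apply cont_within_lim. intros eps Heps.
  destruct (Hd 1 Rlt_0_1) as (e & He & Hq).
  pose proof (vnorm_ge0 d).
  set (k := eps / (vnorm d + 1)).
  assert (Hk : 0 < k) by (unfold k; apply Rdiv_lt_0_compat; lra).
  exists (Rmin e k). split; [now apply Rmin_glb_lt|].
  intros s Hs Hst Hsd.
  pose proof (Rmin_l e k); pose proof (Rmin_r e k).
  specialize (Hq s Hs Hst ltac:(lra)).
  set (Q := vscale (/ (s - t)) (vsub (f s) (f t))) in Hq.
  assert (HQ : vnorm Q <= vnorm d + 1).
  { pose proof (vnorm_vadd_le (vsub Q d) d).
    replace (vadd (vsub Q d) d) with Q in * by vec_ring. lra. }
  replace (vsub (f s) (f t)) with (vscale (s - t) Q)
    by (unfold Q; apply V3_eq; vec_unfold; field; lra).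
  rewrite vnorm_vscale.
  apply Rle_lt_trans with (Rabs (s - t) * (vnorm d + 1)); [apply Rmult_le_compat_l; auto; apply Rabs_pos|].
  apply Rlt_le_trans with (k * (vnorm d + 1)); [apply Rmult_lt_compat_r; lra|].
  unfold k. right. field. lra.
Qed.

Lemma cont_within_glue F fL fR t delta :
  0 < delta ->
  (forall s, t - delta < s < t -> F s = fL s) -> (forall s, t <= s < t + delta -> F s = fR s) ->
  cont_within (Icc (t - delta) t) fL t -> cont_within (Icc t (t + delta)) fR t -> fL t = fR t ->
  cont_within allR F t.
Proof.
  intros Hdelta HL HR CL CR E. rewrite cont_within_lim in *.
  assert (Ht : F t = fR t) by (apply HR; lra).
  apply lim_within_glue with fL fR delta; auto.
  - intros s Hs. apply HR. lra.
  - rewrite Ht, <- E. exact CL.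
  - rewrite Ht. exact CR.
Qed.

Lemma deriv_within_glue F fL fR t delta d :
  0 < delta ->
  (forall s, t - delta < s < t -> F s = fL s) -> (forall s, t <= s < t + delta -> F s = fR s) ->
  deriv_within (Icc (t - delta) t) fL t d -> deriv_within (Icc t (t + delta)) fR t d -> fL t = fR t ->
  deriv_within allR F t d.
Proof.
  intros Hdelta HL HR DL DR E.
  assert (Ht : F t = fR t) by (apply HR; lra).
  apply lim_within_glue with (diff_quot fL t) (diff_quot fR t) delta; auto.
  - intros s Hs. unfold diff_quot. rewrite HL, Ht, E by lra. reflexivity.
  - intros s Hs. unfold diff_quot. rewrite HR, Ht by lra. reflexivity.
Qed.

Lemma cont_within_agree (S : R -> Prop) F f t :
  limpt S t -> cont_within allR F t -> cont_within S f t ->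
  (forall s, S s -> s <> t -> F s = f s) -> F t = f t.
Proof.
  intros Ht CF Cf E. rewrite cont_within_lim in *.
  apply (lim_within_unique S f t); auto.
  apply lim_within_ext with F; auto.
  apply lim_within_subset with allR; [intros; exact I | exact CF].
Qed.

Lemma deriv_within_agree (S : R -> Prop) F f t d d' :
  limpt S t -> S t -> deriv_within allR F t d -> deriv_within S f t d' ->
  (forall s, S s -> F s = f s) -> d = d'.
Proof.
  intros Hlim Ht DF Df E.
  apply (lim_within_unique S (diff_quot f t) t); auto.
  apply lim_within_ext with (diff_quot F t).
  - intros s Hs _. unfold diff_quot. rewrite !E; auto.
  - apply lim_within_subset with allR; [intros; exact I | exact DF].
Qed.

Lemma cont_within_piece F fL fR c a b t :
  c < a -> a <= t < b ->
  (forall s, c <= s < a -> F s = fL s) -> (forall s, a <= s < b -> F s = fR s) ->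
  cont_within (Icc c a) fL a -> cont_on (Icc a b) fR -> fL a = fR a ->
  cont_within allR F t.
Proof.
  intros Hca Ht HL HR CL CR E.
  destruct (Req_dec t a) as [-> | Hne].
  - assert (Hm : 0 < Rmin (a - c) (b - a)) by (apply Rmin_glb_lt; lra).
    pose proof (Rmin_l (a - c) (b - a)); pose proof (Rmin_r (a - c) (b - a)).
    apply (cont_within_glue F fL fR a (Rmin (a - c) (b - a))); auto.
    + intros s Hs. apply HL. lra.
    + intros s Hs. apply HR. lra.
    + apply (cont_within_subset (Icc c a)); auto. unfold Icc; intros; lra.
    + apply (cont_within_subset (Icc a b)); [unfold Icc; intros; lra | apply CR; unfold Icc; lra].
  - assert (Hm : 0 < Rmin (t - a) (b - t)) by (apply Rmin_glb_lt; lra).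
    pose proof (Rmin_l (t - a) (b - t)); pose proof (Rmin_r (t - a) (b - t)).
    apply (cont_within_glue F fR fR t (Rmin (t - a) (b - t))); auto;
      try (intros s Hs; apply HR; lra);
      apply (cont_within_subset (Icc a b)); try (unfold Icc; intros; lra);
      apply CR; unfold Icc; lra.
Qed.

Lemma deriv_within_piece F fL fR dL dR c a b t :
  c < a -> a <= t < b ->
  (forall s, c <= s < a -> F s = fL s) -> (forall s, a <= s < b -> F s = fR s) ->
  deriv_within (Icc c a) fL a dL ->
  (forall u, Icc a b u -> deriv_within (Icc a b) fR u (dR u)) ->
  fL a = fR a -> dL = dR a ->
  deriv_within allR F t (dR t).
Proof.
  intros Hca Ht HL HR DL DR E Ed.
  destruct (Req_dec t a) as [-> | Hne].
  - assert (Hm : 0 < Rmin (a - c) (b - a)) by (apply Rmin_glb_lt; lra).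
    pose proof (Rmin_l (a - c) (b - a)); pose proof (Rmin_r (a - c) (b - a)).
    apply (deriv_within_glue F fL fR a (Rmin (a - c) (b - a))); auto.
    + intros s Hs. apply HL. lra.
    + intros s Hs. apply HR. lra.
    + rewrite <- Ed. apply (deriv_within_subset (Icc c a)); auto.
      unfold Icc; intros; lra.
    + apply (deriv_within_subset (Icc a b)); [unfold Icc; intros; lra | apply DR; unfold Icc; lra].
  - assert (Hm : 0 < Rmin (t - a) (b - t)) by (apply Rmin_glb_lt; lra).
    pose proof (Rmin_l (t - a) (b - t)); pose proof (Rmin_r (t - a) (b - t)).
    apply (deriv_within_glue F fR fR t (Rmin (t - a) (b - t))); auto;
      try (intros s Hs; apply HR; lra);
      apply (deriv_within_subset (Icc a b)); try (unfold Icc; intros; lra);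
      apply DR; unfold Icc; lra.
Qed.

(* [length_on f S] is, by definition, [Lub_Rbar (polygon_lengths f S)]. *)
Definition polygon_lengths (f : R -> V3) (S : R -> Prop) (s : R) : Prop :=
  exists x ts, S x /\ incr_in S x ts /\ s = polysum f x ts.

Fixpoint last_vertex (x : R) (ts : list R) : R :=
  match ts with nil => x | y :: ts' => last_vertex y ts' end.

Lemma last_vertex_snoc x ts z : last_vertex x (ts ++ z :: nil) = z.
Proof. revert x; induction ts; simpl; auto. Qed.

Lemma polysum_snoc f x ts z :
  polysum f x (ts ++ z :: nil) = polysum f x ts + vnorm (vsub (f z) (f (last_vertex x ts))).
Proof. revert x; induction ts as [|y ts IH]; intros x; simpl; [ring | rewrite IH; ring]. Qed.

Lemma incr_in_snoc S x ts z :
  incr_in S x (ts ++ z :: nil) <-> incr_in S x ts /\ last_vertex x ts < z /\ S z.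
Proof. revert x; induction ts as [|y ts IH]; intros x; simpl; [tauto | rewrite IH; tauto]. Qed.

Lemma last_vertex_in (S : R -> Prop) x ts : S x -> incr_in S x ts -> S (last_vertex x ts).
Proof. revert x; induction ts as [|y ts IH]; intros x; simpl; intuition. Qed.

Lemma last_vertex_ge S x ts : incr_in S x ts -> x <= last_vertex x ts.
Proof.
  revert x; induction ts as [|y ts IH]; intros x; simpl; [lra|].
  intros (? & _ & H). specialize (IH _ H). lra.
Qed.

Lemma incr_in_weaken (S S' : R -> Prop) x ts :
  (forall t, S t -> x < t -> S' t) -> incr_in S x ts -> incr_in S' x ts.
Proof.
  revert x; induction ts as [|y ts IH]; intros x H; simpl; auto.
  intros (? & ? & ?). repeat split; auto. apply IH; auto. intros t ? ?. apply H; auto; lra.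
Qed.

Lemma incr_in_below (S : R -> Prop) x ts c :
  incr_in S x ts -> last_vertex x ts < c -> incr_in (fun t => S t /\ t < c) x ts.
Proof.
  revert x; induction ts as [|y ts IH]; intros x; simpl; auto.
  intros (? & ? & H) Hl. pose proof (last_vertex_ge _ _ _ H). repeat split; auto. lra.
Qed.

Lemma polysum_ext (S : R -> Prop) f g x ts :
  (forall t, S t -> f t = g t) -> S x -> incr_in S x ts -> polysum f x ts = polysum g x ts.
Proof.
  intros Hfg. revert x; induction ts as [|y ts IH]; intros x Hx Hi; simpl; auto.
  destruct Hi as (_ & Hy & Hi). rewrite (Hfg x), (Hfg y), IH; auto.
Qed.

Lemma length_on_ext f g S : (forall t, S t -> f t = g t) -> length_on f S = length_on g S.
Proof.
  intros Hfg. apply Lub_Rbar_eqset. intros s.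
  split; intros (x & ts & Hx & Hi & ->); exists x, ts; repeat split; auto.
  - apply polysum_ext with S; auto.
  - symmetry. apply polysum_ext with S; auto.
Qed.

Lemma length_on_isometry A f S :
  lin_isometry A -> length_on (fun t => A (f t)) S = length_on f S.
Proof.
  intros HA.
  assert (E : forall x ts, polysum (fun t => A (f t)) x ts = polysum f x ts).
  { intros x ts; revert x; induction ts as [|y ts IH]; intros x; simpl; auto.
    rewrite IH, lin_isometry_dist by exact HA. reflexivity. }
  apply Lub_Rbar_eqset. intros s.
  split; intros (x & ts & Hx & Hi & ->); exists x, ts; rewrite ?E; auto.
Qed.

Lemma polygon_comp_incr (S S' : R -> Prop) f phi :
  (forall t, S' t -> S (phi t)) -> (forall u v, u < v -> phi u < phi v) ->
  forall ts x, S' x -> incr_in S' x ts ->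
  incr_in S (phi x) (map phi ts) /\ polysum f (phi x) (map phi ts) = polysum (fun t => f (phi t)) x ts.
Proof.
  intros HS Hphi. induction ts as [|y ts IH]; intros x Hx Hi; simpl; auto.
  destruct Hi as (Hxy & Hy & Hi). destruct (IH y Hy Hi) as [IH1 IH2].
  rewrite IH2. auto.
Qed.

Lemma polygon_comp_decr (S S' : R -> Prop) f phi :
  (forall t, S' t -> S (phi t)) -> (forall u v, u < v -> phi v < phi u) ->
  forall ts x, S' x -> incr_in S' x ts ->
  exists x' ts', S x' /\ incr_in S x' ts' /\ last_vertex x' ts' = phi x /\
    polysum f x' ts' = polysum (fun t => f (phi t)) x ts.
Proof.
  intros HS Hphi. induction ts as [|y ts IH]; intros x Hx Hi.
  - exists (phi x), nil. simpl. auto.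
  - destruct Hi as (Hxy & Hy & Hi). destruct (IH y Hy Hi) as (x' & ts' & Hx' & Hi' & Hl & Hs).
    exists x', (ts' ++ phi x :: nil). rewrite incr_in_snoc, last_vertex_snoc, polysum_snoc, Hl, Hs.
    simpl. rewrite vnorm_vsub_sym. repeat split; auto; ring.
Qed.

Lemma polygon_lengths_comp (S S' : R -> Prop) f phi s :
  (forall t, S' t -> S (phi t)) ->
  (forall u v, u < v -> phi u < phi v) \/ (forall u v, u < v -> phi v < phi u) ->
  polygon_lengths (fun t => f (phi t)) S' s -> polygon_lengths f S s.
Proof.
  intros HS [Hphi | Hphi] (x & ts & Hx & Hi & ->).
  - destruct (polygon_comp_incr S S' f phi HS Hphi ts x Hx Hi) as [H1 H2].
    exists (phi x), (map phi ts). auto.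
  - destruct (polygon_comp_decr S S' f phi HS Hphi ts x Hx Hi) as (x' & ts' & ? & ? & _ & ?).
    exists x', ts'. auto.
Qed.

Lemma affine_strict_mono phi a :
  a <> 0 -> (forall u v, phi u - phi v = a * (u - v)) ->
  (forall u v, u < v -> phi u < phi v) \/ (forall u v, u < v -> phi v < phi u).
Proof.
  intros Ha Hphi. destruct (Rlt_or_le 0 a) as [Ha' | Ha']; [left | right]; intros u v Huv.
  - specialize (Hphi v u). nra.
  - specialize (Hphi v u). assert (a < 0) by lra. nra.
Qed.

Lemma length_on_reparam f S S' phi a :
  a <> 0 -> (forall u v, phi u - phi v = a * (u - v)) -> (forall t, S' t <-> S (phi t)) ->
  length_on (fun t => f (phi t)) S' = length_on f S.
Proof.
  intros Ha Hphi HS.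
  set (psi u := (u - phi 0) / a).
  assert (Hpsi : forall u, phi (psi u) = u).
  { intros u. specialize (Hphi (psi u) 0). unfold psi in *. field_simplify in Hphi; [lra | auto]. }
  apply Lub_Rbar_eqset. intros s. split.
  - apply polygon_lengths_comp; [apply HS | exact (affine_strict_mono _ _ Ha Hphi)].
  - intros Hs. apply (polygon_lengths_comp S' S _ psi).
    + intros t Ht. apply HS. rewrite Hpsi. exact Ht.
    + apply (affine_strict_mono _ (/ a)); [now apply Rinv_neq_0_compat|].
      intros u v. unfold psi. field. exact Ha.
    + destruct Hs as (x & ts & Hx & Hi & ->). exists x, ts. repeat split; auto.
      apply polysum_ext with S; auto. intros t _. rewrite Hpsi. reflexivity.
Qed.

Lemma Lub_Rbar_le_approx (E1 E2 : R -> Prop) :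
  (forall x, E2 x -> forall eps, 0 < eps -> exists y, E1 y /\ x - eps <= y) ->
  Rbar_le (Lub_Rbar E2) (Lub_Rbar E1).
Proof.
  intros H. apply (proj2 (Lub_Rbar_correct E2)).
  intros x Hx. pose proof (proj1 (Lub_Rbar_correct E1)) as Hub. revert Hub.
  destruct (Lub_Rbar E1) as [r | |]; simpl; intros Hub; auto.
  - destruct (Rle_or_lt x r) as [Hxr | Hxr]; auto.
    destruct (H x Hx ((x - r) / 2)) as (y & Hy & Hxy); [lra|].
    specialize (Hub y Hy). simpl in Hub. lra.
  - destruct (H x Hx 1 Rlt_0_1) as (y & Hy & _). exact (Hub y Hy).
Qed.

Lemma polygon_lengths_Icc_approx f a b s eps :
  a < b -> cont_within (Icc a b) f b -> 0 < eps -> polygon_lengths f (Icc a b) s ->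
  exists s', polygon_lengths f (Ico a b) s' /\ s - eps <= s'.
Proof.
  intros Hab Hcont Heps (x & ts & Hx & Hi & ->).
  assert (Below : forall ts', incr_in (Icc a b) x ts' -> last_vertex x ts' < b ->
    incr_in (Ico a b) x ts').
  { intros ts' Hi' Hl. apply (incr_in_weaken (fun t => Icc a b t /\ t < b)).
    - unfold Icc, Ico. intros t Ht _. lra.
    - apply incr_in_below; auto. }
  pose proof (last_vertex_ge _ _ _ Hi). pose proof (last_vertex_in _ _ _ Hx Hi) as Hlast.
  destruct (Rlt_or_le (last_vertex x ts) b) as [Hlt | Hge].
  { exists (polysum f x ts). split; [|lra]. exists x, ts. unfold Icc, Ico in *. repeat split; auto; lra. }
  induction ts as [|z ts0 _] using rev_ind.
  { exists 0. split; [exists a, nil; simpl; unfold Ico; repeat split; lra | simpl; lra]. }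
  rewrite last_vertex_snoc in Hlast, Hge. rewrite incr_in_snoc in Hi. destruct Hi as (Hi0 & Hpz & _).
  assert (z = b) as -> by (unfold Icc in Hlast; lra).
  pose proof (last_vertex_ge _ _ _ Hi0).
  set (p := last_vertex x ts0) in *.
  (* move the last vertex from [b] into [Ico a b], at a point where [f] is eps-close to [f b] *)
  destruct (Hcont eps Heps) as (d & Hd & Hfd).
  pose proof (Rmax_l (p + (b - p) / 2) (b - d / 2)); pose proof (Rmax_r (p + (b - p) / 2) (b - d / 2)).
  assert (Rmax (p + (b - p) / 2) (b - d / 2) < b) by (apply Rmax_lub_lt; lra).
  set (z := Rmax (p + (b - p) / 2) (b - d / 2)) in *.
  exists (polysum f x (ts0 ++ z :: nil)). split.
  - exists x, (ts0 ++ z :: nil). rewrite incr_in_snoc.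
    unfold Icc in Hx. unfold Ico.
    split; [lra|]. split; [|reflexivity]. split; [apply Below; auto | fold p; repeat split; lra].
  - rewrite !polysum_snoc. fold p. unfold Icc in Hx.
    pose proof (vnorm_vsub_le (f b) (f z) (f p)).
    assert (vnorm (vsub (f z) (f b)) < eps) by (apply Hfd; [unfold Icc; split; lra | rewrite Rabs_left; lra]).
    rewrite vnorm_vsub_sym in *. lra.
Qed.

Lemma length_on_Ico_Icc f a b :
  a < b -> cont_within (Icc a b) f b -> length_on f (Ico a b) = length_on f (Icc a b).
Proof.
  intros Hab Hcont. apply Rbar_le_antisym.
  - apply (is_lub_Rbar_subset (polygon_lengths f (Icc a b)) (polygon_lengths f (Ico a b)));
      try apply Lub_Rbar_correct.
    intros s (x & ts & Hx & Hi & ->). exists x, ts. unfold Icc, Ico in *. repeat split; try lra.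
    apply (incr_in_weaken (Ico a b)); auto. unfold Icc, Ico. intros; lra.
  - apply Lub_Rbar_le_approx. intros s Hs eps Heps.
    exact (polygon_lengths_Icc_approx f a b s eps Hab Hcont Heps Hs).
Qed.

Definition Ioc (a b : R) : R -> Prop := fun t => a < t <= b.

(* reduced to [length_on_Ico_Icc] through the reflection [t |-> -t] *)
Lemma length_on_Ioc_Icc f a b :
  a < b -> cont_within (Icc a b) f a -> length_on f (Ioc a b) = length_on f (Icc a b).
Proof.
  intros Hab Hcont.
  assert (Hopp : forall u v, - u - - v = -1 * (u - v)) by (intros; ring).
  rewrite <- (length_on_reparam f (Ioc a b) (Ico (- b) (- a)) Ropp (-1)),
    <- (length_on_reparam f (Icc a b) (Icc (- b) (- a)) Ropp (-1)); auto;
    try (intros t; unfold Icc, Ico, Ioc; split; intros; lra); try lra.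
  apply length_on_Ico_Icc; [lra|].
  apply (cont_within_isometric_comp (Icc a b) _ (fun v => v) f Ropp (-1));
    auto using id_isometry, Rabs_m1; [unfold Icc; intros; lra |].
  rewrite Ropp_involutive. exact Hcont.
Qed.

Lemma cont_within_periodic F c t :
  (forall s, F (s + c) = F s) -> cont_within allR F t -> cont_within allR F (t + c).
Proof.
  intros HF. rewrite !cont_within_lim, HF. apply lim_within_shift. exact HF.
Qed.

Lemma deriv_within_periodic F c t d :
  (forall s, F (s + c) = F s) -> deriv_within allR F t d -> deriv_within allR F (t + c) d.
Proof.
  intros HF. apply lim_within_shift. intros s. unfold diff_quot. rewrite !HF.
  replace (s + c - (t + c)) with (s - t) by ring. reflexivity.
Qed.

Lemma frac_part_add_IZR x k : frac_part (x + IZR k) = frac_part x.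
Proof.
  pose proof (base_fp x). pose proof (Rplus_Int_part_frac_part x).
  symmetry. apply (Int_part_frac_part_spec (x + IZR k) (Int_part x + k)); [lra|].
  rewrite plus_IZR. lra.
Qed.

Section PeriodicExtension.
Variables (l : R) (g : R -> V3).
Hypothesis l_gt0 : 0 < l.

Lemma periodic_ext_shift s k : periodic_ext l g (s + IZR k * l) = periodic_ext l g s.
Proof.
  unfold periodic_ext. replace ((s + IZR k * l) / l) with (s / l + IZR k) by (field; lra).
  rewrite frac_part_add_IZR. reflexivity.
Qed.

Lemma periodic_ext_base s : 0 <= s < l -> periodic_ext l g s = g s.
Proof.
  intros Hs. unfold periodic_ext.
  assert (0 <= s / l < 1).
  { split; [apply Rdiv_le_0_compat; lra|]. apply Rmult_lt_reg_r with l; auto. field_simplify; lra. }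
  replace (frac_part (s / l)) with (s / l)
    by (apply (Int_part_frac_part_spec (s / l) 0); [auto | simpl; ring]).
  f_equal. field. lra.
Qed.

Lemma periodic_ext_neg s : -l <= s < 0 -> periodic_ext l g s = g (s + l).
Proof.
  intros Hs. replace s with ((s + l) + IZR (-1) * l) at 1 by (simpl; ring).
  rewrite periodic_ext_shift. apply periodic_ext_base. lra.
Qed.

End PeriodicExtension.

Lemma R_decomp_mod l t : 0 < l -> exists t' k, 0 <= t' < l /\ t = t' + IZR k * l.
Proof.
  intros Hl. exists (l * frac_part (t / l)), (Int_part (t / l)).
  pose proof (base_fp (t / l)). pose proof (Rplus_Int_part_frac_part (t / l)) as Ht.
  split; [split; nra|].
  replace t with (l * (t / l)) at 1 by (field; lra). rewrite Ht at 1. ring.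
Qed.

Definition quarters (l : R) (f0 f1 f2 f3 : R -> V3) (t : R) : V3 :=
  if Rlt_dec t (l / 4) then f0 t
  else if Rlt_dec t (l / 2) then f1 t
  else if Rlt_dec t (3 * l / 4) then f2 t
  else f3 t.

Section Quarters.
Variables (l : R) (f0 f1 f2 f3 : R -> V3).
Hypothesis l_ge0 : 0 <= l.

Lemma quarters_0 t : t < l / 4 -> quarters l f0 f1 f2 f3 t = f0 t.
Proof. intros; unfold quarters; destruct (Rlt_dec t (l / 4)); [reflexivity | lra]. Qed.

Lemma quarters_1 t : l / 4 <= t < l / 2 -> quarters l f0 f1 f2 f3 t = f1 t.
Proof.
  intros; unfold quarters; destruct (Rlt_dec t (l / 4)); [lra|].
  destruct (Rlt_dec t (l / 2)); [reflexivity | lra].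
Qed.

Lemma quarters_2 t : l / 2 <= t < 3 * l / 4 -> quarters l f0 f1 f2 f3 t = f2 t.
Proof.
  intros; unfold quarters; destruct (Rlt_dec t (l / 4)); [lra|].
  destruct (Rlt_dec t (l / 2)); [lra|]. destruct (Rlt_dec t (3 * l / 4)); [reflexivity | lra].
Qed.

Lemma quarters_3 t : 3 * l / 4 <= t -> quarters l f0 f1 f2 f3 t = f3 t.
Proof.
  intros; unfold quarters; destruct (Rlt_dec t (l / 4)); [lra|].
  destruct (Rlt_dec t (l / 2)); [lra|]. destruct (Rlt_dec t (3 * l / 4)); [lra | reflexivity].
Qed.

End Quarters.

Section PeriodicQuarters.
Variable l : R.
Hypothesis l_gt0 : 0 < l.

Notation F f0 f1 f2 f3 := (periodic_ext l (quarters l f0 f1 f2 f3)).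

Lemma periodic_quarters_0 f0 f1 f2 f3 s : 0 <= s < l / 4 -> F f0 f1 f2 f3 s = f0 s.
Proof.
  intros Hs. rewrite periodic_ext_base by lra. apply quarters_0; lra.
Qed.

Lemma periodic_quarters_1 f0 f1 f2 f3 s : l / 4 <= s < l / 2 -> F f0 f1 f2 f3 s = f1 s.
Proof.
  intros Hs. rewrite periodic_ext_base by lra. apply quarters_1; lra.
Qed.

Lemma periodic_quarters_2 f0 f1 f2 f3 s : l / 2 <= s < 3 * l / 4 -> F f0 f1 f2 f3 s = f2 s.
Proof.
  intros Hs. rewrite periodic_ext_base by lra. apply quarters_2; lra.
Qed.

Lemma periodic_quarters_3 f0 f1 f2 f3 s : 3 * l / 4 <= s < l -> F f0 f1 f2 f3 s = f3 s.
Proof.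
  intros Hs. rewrite periodic_ext_base by lra. apply quarters_3; lra.
Qed.

Lemma periodic_quarters_last f0 f1 f2 f3 s : - (l / 4) <= s < 0 -> F f0 f1 f2 f3 s = f3 (s + l).
Proof.
  intros Hs. rewrite periodic_ext_neg by lra. apply quarters_3; lra.
Qed.

Lemma periodic_quarters_cont f0 f1 f2 f3 :
  cont_on (Icc 0 (l / 4)) f0 -> cont_on (Icc (l / 4) (l / 2)) f1 ->
  cont_on (Icc (l / 2) (3 * l / 4)) f2 -> cont_on (Icc (3 * l / 4) l) f3 ->
  f0 (l / 4) = f1 (l / 4) -> f1 (l / 2) = f2 (l / 2) -> f2 (3 * l / 4) = f3 (3 * l / 4) ->
  f3 l = f0 0 ->
  cont_on allR (F f0 f1 f2 f3).
Proof.
  intros C0 C1 C2 C3 E1 E2 E3 E4 t _.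
  destruct (R_decomp_mod l t l_gt0) as (t' & k & Ht' & ->).
  apply cont_within_periodic; [intros s; apply periodic_ext_shift; exact l_gt0|].
  destruct (Rlt_or_le t' (l / 4)); [|destruct (Rlt_or_le t' (l / 2));
    [|destruct (Rlt_or_le t' (3 * l / 4))]].
  - apply (cont_within_piece _ (fun s => f3 (s + l)) f0 (- (l / 4)) 0 (l / 4)); try lra; auto.
    + intros s Hs. apply periodic_quarters_last. lra.
    + intros s Hs. apply periodic_quarters_0. lra.
    + apply (cont_within_isometric_comp (Icc (3 * l / 4) l) _ (fun v => v) f3 (fun s => s + l) 1);
        auto using id_isometry, Rabs_R1; [intros; ring | unfold Icc; intros; lra |].
      rewrite Rplus_0_l. apply C3. unfold Icc. lra.
    + rewrite Rplus_0_l. exact E4.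
  - apply (cont_within_piece _ f0 f1 0 (l / 4) (l / 2)); try lra; auto;
      [intros s Hs; apply periodic_quarters_0 | intros s Hs; apply periodic_quarters_1 |
       apply C0; unfold Icc]; lra.
  - apply (cont_within_piece _ f1 f2 (l / 4) (l / 2) (3 * l / 4)); try lra; auto;
      [intros s Hs; apply periodic_quarters_1 | intros s Hs; apply periodic_quarters_2 |
       apply C1; unfold Icc]; lra.
  - apply (cont_within_piece _ f2 f3 (l / 2) (3 * l / 4) l); try lra; auto;
      [intros s Hs; apply periodic_quarters_2 | intros s Hs; apply periodic_quarters_3 |
       apply C2; unfold Icc]; lra.
Qed.

Lemma periodic_quarters_deriv f0 f1 f2 f3 d0 d1 d2 d3 :
  (forall t, Icc 0 (l / 4) t -> deriv_within (Icc 0 (l / 4)) f0 t (d0 t)) ->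
  (forall t, Icc (l / 4) (l / 2) t -> deriv_within (Icc (l / 4) (l / 2)) f1 t (d1 t)) ->
  (forall t, Icc (l / 2) (3 * l / 4) t -> deriv_within (Icc (l / 2) (3 * l / 4)) f2 t (d2 t)) ->
  (forall t, Icc (3 * l / 4) l t -> deriv_within (Icc (3 * l / 4) l) f3 t (d3 t)) ->
  f0 (l / 4) = f1 (l / 4) -> f1 (l / 2) = f2 (l / 2) -> f2 (3 * l / 4) = f3 (3 * l / 4) ->
  f3 l = f0 0 ->
  d0 (l / 4) = d1 (l / 4) -> d1 (l / 2) = d2 (l / 2) -> d2 (3 * l / 4) = d3 (3 * l / 4) ->
  d3 l = d0 0 ->
  forall t, deriv_within allR (F f0 f1 f2 f3) t (F d0 d1 d2 d3 t).
Proof.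
  intros D0 D1 D2 D3 E1 E2 E3 E4 E1' E2' E3' E4' t.
  destruct (R_decomp_mod l t l_gt0) as (t' & k & Ht' & ->).
  rewrite periodic_ext_shift by exact l_gt0.
  apply deriv_within_periodic; [intros s; apply periodic_ext_shift; exact l_gt0|].
  destruct (Rlt_or_le t' (l / 4)); [|destruct (Rlt_or_le t' (l / 2));
    [|destruct (Rlt_or_le t' (3 * l / 4))]].
  - rewrite periodic_quarters_0 by lra.
    apply (deriv_within_piece _ (fun s => f3 (s + l)) f0 (vscale 1 (d3 (0 + l))) d0 (- (l / 4)) 0 (l / 4));
      try lra; auto.
    + intros s Hs. apply periodic_quarters_last. lra.
    + intros s Hs. apply periodic_quarters_0. lra.
    + apply (deriv_within_isometric_comp (Icc (3 * l / 4) l) _ (fun v => v) f3 (fun s => s + l) 1);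
        auto using id_isometry, Rabs_R1; [intros; ring | unfold Icc; intros; lra |].
      rewrite Rplus_0_l. apply D3. unfold Icc. lra.
    + rewrite Rplus_0_l. exact E4.
    + rewrite Rplus_0_l, vscale_1. exact E4'.
  - rewrite periodic_quarters_1 by lra.
    apply (deriv_within_piece _ f0 f1 (d0 (l / 4)) d1 0 (l / 4) (l / 2)); try lra; auto;
      [intros s Hs; apply periodic_quarters_0 | intros s Hs; apply periodic_quarters_1 |
       apply D0; unfold Icc]; lra.
  - rewrite periodic_quarters_2 by lra.
    apply (deriv_within_piece _ f1 f2 (d1 (l / 2)) d2 (l / 4) (l / 2) (3 * l / 4)); try lra; auto;
      [intros s Hs; apply periodic_quarters_1 | intros s Hs; apply periodic_quarters_2 |
       apply D1; unfold Icc]; lra.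
  - rewrite periodic_quarters_3 by lra.
    apply (deriv_within_piece _ f2 f3 (d2 (3 * l / 4)) d3 (l / 2) (3 * l / 4) l); try lra; auto;
      [intros s Hs; apply periodic_quarters_2 | intros s Hs; apply periodic_quarters_3 |
       apply D2; unfold Icc]; lra.
Qed.

End PeriodicQuarters.

Section Gcurve.
Variables (l : R) (alpha : R -> V3).
Hypothesis l_gt0 : 0 < l.

Lemma gcurve_quarters : gcurve l alpha =
  quarters l alpha (fun t => Rf1 (alpha (psi1 l t))) (fun t => Rf2 (alpha (psi2 l t)))
    (fun t => Rf3 (alpha (psi3 l t))).
Proof. reflexivity. Qed.

Lemma psi1_slope u v : psi1 l u - psi1 l v = -1 * (u - v).
Proof. unfold psi1. ring. Qed.

Lemma psi2_slope u v : psi2 l u - psi2 l v = 1 * (u - v).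
Proof. unfold psi2. ring. Qed.

Lemma psi3_slope u v : psi3 l u - psi3 l v = -1 * (u - v).
Proof. unfold psi3. ring. Qed.

Lemma psi_junctions :
  psi1 l (l / 4) = l / 4 /\ psi1 l (l / 2) = 0 /\ psi2 l (l / 2) = 0 /\
  psi2 l (3 * l / 4) = l / 4 /\ psi3 l (3 * l / 4) = l / 4 /\ psi3 l l = 0.
Proof. unfold psi1, psi2, psi3. repeat split; field. Qed.

Lemma reflected_pieces_cont A1 A2 A3 f :
  lin_isometry A1 -> lin_isometry A2 -> lin_isometry A3 -> cont_on (Icc 0 (l / 4)) f ->
  cont_on (Icc (l / 4) (l / 2)) (fun t => A1 (f (psi1 l t))) /\
  cont_on (Icc (l / 2) (3 * l / 4)) (fun t => A2 (f (psi2 l t))) /\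
  cont_on (Icc (3 * l / 4) l) (fun t => A3 (f (psi3 l t))).
Proof.
  intros HA1 HA2 HA3 Hf. repeat split.
  - apply (cont_on_isometric_comp (Icc 0 (l / 4)) _ A1 f _ (-1)); auto using Rabs_m1, psi1_slope.
    unfold Icc, psi1. intros; lra.
  - apply (cont_on_isometric_comp (Icc 0 (l / 4)) _ A2 f _ 1); auto using Rabs_R1, psi2_slope.
    unfold Icc, psi2. intros; lra.
  - apply (cont_on_isometric_comp (Icc 0 (l / 4)) _ A3 f _ (-1)); auto using Rabs_m1, psi3_slope.
    unfold Icc, psi3. intros; lra.
Qed.

Lemma gcurve_junctions :
  in_line e3 (alpha 0) -> in_line e1 (alpha (l / 4)) ->
  alpha (l / 4) = Rf1 (alpha (psi1 l (l / 4))) /\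
  Rf1 (alpha (psi1 l (l / 2))) = Rf2 (alpha (psi2 l (l / 2))) /\
  Rf2 (alpha (psi2 l (3 * l / 4))) = Rf3 (alpha (psi3 l (3 * l / 4))) /\
  Rf3 (alpha (psi3 l l)) = alpha 0.
Proof.
  destruct psi_junctions as (-> & -> & -> & -> & -> & ->). intros H3 H1. repeat split.
  - symmetry. apply Rf1_fixed_iff. exact H1.
  - apply Rf1_Rf2_on_e3. exact H3.
  - apply Rf2_Rf3_on_e1. exact H1.
  - apply Rf3_fixed_iff. exact H3.
Qed.

(* the pieces of [g'] traversed backwards pick up the sign of [psi1'] and [psi3'] *)
Lemma reflected_deriv_junctions (w : R -> V3) :
  in_span2 e1 e2 (w 0) -> in_span2 e2 e3 (w (l / 4)) ->
  w (l / 4) = vscale (-1) (Rf1 (w (psi1 l (l / 4)))) /\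
  vscale (-1) (Rf1 (w (psi1 l (l / 2)))) = Rf2 (w (psi2 l (l / 2))) /\
  Rf2 (w (psi2 l (3 * l / 4))) = vscale (-1) (Rf3 (w (psi3 l (3 * l / 4)))) /\
  vscale (-1) (Rf3 (w (psi3 l l))) = w 0.
Proof.
  destruct psi_junctions as (-> & -> & -> & -> & -> & ->). intros S12 S23. repeat split.
  - symmetry. apply Rf1_antifixed_iff. exact S23.
  - apply Rf1_Rf2_on_e1e2. exact S12.
  - apply Rf2_Rf3_on_e2e3. exact S23.
  - apply Rf3_antifixed_iff. exact S12.
Qed.

Hypothesis alpha_cont : cont_on (Icc 0 (l / 4)) alpha.

Lemma glength_gcurve La :
  length_on alpha (Icc 0 (l / 4)) = Finite La -> glength l (gcurve l alpha) = Finite (4 * La).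
Proof.
  intros HL.
  assert (Ico_len : length_on alpha (Ico 0 (l / 4)) = Finite La).
  { rewrite length_on_Ico_Icc; auto; [lra | apply alpha_cont; unfold Icc; lra]. }
  assert (Ioc_len : length_on alpha (Ioc 0 (l / 4)) = Finite La).
  { rewrite length_on_Ioc_Icc; auto; [lra | apply alpha_cont; unfold Icc; lra]. }
  unfold glength. rewrite gcurve_quarters.
  rewrite (length_on_ext _ alpha (Ico 0 (l / 4))) by (intros; apply quarters_0; unfold Ico in *; lra).
  rewrite (length_on_ext _ (fun t => Rf1 (alpha (psi1 l t))) (Ico (l / 4) (l / 2)))
    by (intros; apply quarters_1; unfold Ico in *; lra).
  rewrite (length_on_ext _ (fun t => Rf2 (alpha (psi2 l t))) (Ico (l / 2) (3 * l / 4)))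
    by (intros; apply quarters_2; unfold Ico in *; lra).
  rewrite (length_on_ext _ (fun t => Rf3 (alpha (psi3 l t))) (Ico (3 * l / 4) l))
    by (intros; apply quarters_3; unfold Ico in *; lra).
  rewrite !length_on_isometry by (apply Rf1_isometry || apply Rf2_isometry || apply Rf3_isometry).
  rewrite (length_on_reparam alpha (Ioc 0 (l / 4)) _ (psi1 l) (-1)),
    (length_on_reparam alpha (Ico 0 (l / 4)) _ (psi2 l) 1),
    (length_on_reparam alpha (Ioc 0 (l / 4)) _ (psi3 l) (-1));
    try (apply psi1_slope || apply psi2_slope || apply psi3_slope); try lra;
    try (intros t; unfold Ico, Ioc, psi1, psi2, psi3; split; intros; lra).
  rewrite Ico_len, Ioc_len. simpl. f_equal. ring.
Qed.

Lemma gcurve_cont_at_0 :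
  cont_within allR (periodic_ext l (gcurve l alpha)) 0 -> in_line e3 (alpha 0).
Proof.
  intros HC. apply Rf3_fixed_iff. rewrite gcurve_quarters in HC.
  assert (E : periodic_ext l (gcurve l alpha) 0 = Rf3 (alpha (psi3 l (0 + l)))).
  { apply (cont_within_agree (Icc (- (l / 4)) 0) _ (fun s => Rf3 (alpha (psi3 l (s + l))))); auto.
    - apply limpt_Icc; unfold Icc; lra.
    - apply (cont_within_isometric_comp (Icc 0 (l / 4)) _ Rf3 alpha (fun s => psi3 l (s + l)) (-1));
        auto using Rf3_isometry, Rabs_m1.
      + intros u v. unfold psi3. ring.
      + unfold Icc, psi3. intros; lra.
      + apply alpha_cont. unfold Icc, psi3. lra.
    - intros s Hs Hs0. unfold Icc in Hs. apply periodic_quarters_last; lra. }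
  destruct psi_junctions as (_ & _ & _ & _ & _ & P3l).
  rewrite gcurve_quarters, periodic_quarters_0, Rplus_0_l, P3l in E by lra.
  auto.
Qed.

Lemma gcurve_cont_at_quarter :
  cont_within allR (periodic_ext l (gcurve l alpha)) (l / 4) -> in_line e1 (alpha (l / 4)).
Proof.
  intros HC. apply Rf1_fixed_iff. rewrite gcurve_quarters in HC.
  assert (E : periodic_ext l (gcurve l alpha) (l / 4) = alpha (l / 4)).
  { apply (cont_within_agree (Icc 0 (l / 4)) _ alpha); auto.
    - apply limpt_Icc; unfold Icc; lra.
    - apply alpha_cont. unfold Icc. lra.
    - intros s Hs Hs0. unfold Icc in Hs. apply periodic_quarters_0; lra. }
  destruct psi_junctions as (P1q & _).
  rewrite gcurve_quarters, periodic_quarters_1, P1q in E by lra.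
  exact E.
Qed.

Lemma C0_circle_gcurve :
  C0_circle l (gcurve l alpha) <-> in_line e3 (alpha 0) /\ in_line e1 (alpha (l / 4)).
Proof.
  split.
  - intros HC. split; [apply gcurve_cont_at_0 | apply gcurve_cont_at_quarter]; apply HC; exact I.
  - intros [H3 H1].
    destruct (reflected_pieces_cont Rf1 Rf2 Rf3 alpha) as (C1 & C2 & C3);
      auto using Rf1_isometry, Rf2_isometry, Rf3_isometry.
    destruct (gcurve_junctions H3 H1) as (J1 & J2 & J3 & J4).
    apply periodic_quarters_cont; auto.
Qed.

Section Derivative.
Variable dalpha : R -> V3.
Hypothesis alpha_deriv :
  forall t, Icc 0 (l / 4) t -> deriv_within (Icc 0 (l / 4)) alpha t (dalpha t).

Lemma reflected_pieces_deriv :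
  (forall t, Icc (l / 4) (l / 2) t -> deriv_within (Icc (l / 4) (l / 2))
     (fun s => Rf1 (alpha (psi1 l s))) t (vscale (-1) (Rf1 (dalpha (psi1 l t))))) /\
  (forall t, Icc (l / 2) (3 * l / 4) t -> deriv_within (Icc (l / 2) (3 * l / 4))
     (fun s => Rf2 (alpha (psi2 l s))) t (Rf2 (dalpha (psi2 l t)))) /\
  (forall t, Icc (3 * l / 4) l t -> deriv_within (Icc (3 * l / 4) l)
     (fun s => Rf3 (alpha (psi3 l s))) t (vscale (-1) (Rf3 (dalpha (psi3 l t))))).
Proof.
  repeat split; intros t Ht; unfold Icc in Ht.
  - apply (deriv_within_isometric_comp (Icc 0 (l / 4)) _ Rf1 alpha (psi1 l) (-1));
      auto using Rf1_isometry, Rabs_m1, psi1_slope.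
    + unfold Icc, psi1. intros; lra.
    + apply alpha_deriv. unfold Icc, psi1. lra.
  - rewrite <- vscale_1.
    apply (deriv_within_isometric_comp (Icc 0 (l / 4)) _ Rf2 alpha (psi2 l) 1);
      auto using Rf2_isometry, Rabs_R1, psi2_slope.
    + unfold Icc, psi2. intros; lra.
    + apply alpha_deriv. unfold Icc, psi2. lra.
  - apply (deriv_within_isometric_comp (Icc 0 (l / 4)) _ Rf3 alpha (psi3 l) (-1));
      auto using Rf3_isometry, Rabs_m1, psi3_slope.
    + unfold Icc, psi3. intros; lra.
    + apply alpha_deriv. unfold Icc, psi3. lra.
Qed.

Lemma gcurve_deriv_at_0 d :
  in_line e3 (alpha 0) -> deriv_within allR (periodic_ext l (gcurve l alpha)) 0 d ->
  in_span2 e1 e2 (dalpha 0).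
Proof.
  intros H3 Hd. apply Rf3_antifixed_iff. rewrite gcurve_quarters in Hd.
  set (F := periodic_ext l _) in Hd.
  destruct psi_junctions as (_ & _ & _ & _ & _ & P3l).
  assert (Eright : d = dalpha 0).
  { apply (deriv_within_agree (Icc 0 (l / 8)) F alpha 0); auto.
    - apply limpt_Icc; unfold Icc; lra.
    - unfold Icc; lra.
    - apply (deriv_within_subset (Icc 0 (l / 4))); [unfold Icc; intros; lra|].
      apply alpha_deriv. unfold Icc; lra.
    - intros s Hs. unfold Icc in Hs. apply periodic_quarters_0; lra. }
  assert (Eleft : d = vscale (-1) (Rf3 (dalpha (psi3 l (0 + l))))).
  { apply (deriv_within_agree (Icc (- (l / 4)) 0) F (fun s => Rf3 (alpha (psi3 l (s + l)))) 0); auto.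
    - apply limpt_Icc; unfold Icc; lra.
    - unfold Icc; lra.
    - apply (deriv_within_isometric_comp (Icc 0 (l / 4)) _ Rf3 alpha (fun s => psi3 l (s + l)) (-1));
        auto using Rf3_isometry, Rabs_m1.
      + intros u v. unfold psi3. ring.
      + unfold Icc, psi3. intros; lra.
      + apply alpha_deriv. unfold Icc, psi3. lra.
    - intros s Hs. unfold Icc in Hs. destruct (Req_dec s 0) as [-> | Hs0].
      + unfold F. rewrite periodic_quarters_0, Rplus_0_l, P3l by lra.
        symmetry. apply Rf3_fixed_iff. exact H3.
      + apply periodic_quarters_last; lra. }
  rewrite Rplus_0_l, P3l in Eleft. congruence.
Qed.

Lemma gcurve_deriv_at_quarter d :
  in_line e1 (alpha (l / 4)) -> deriv_within allR (periodic_ext l (gcurve l alpha)) (l / 4) d ->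
  in_span2 e2 e3 (dalpha (l / 4)).
Proof.
  intros H1 Hd. apply Rf1_antifixed_iff. rewrite gcurve_quarters in Hd.
  set (F := periodic_ext l _) in Hd.
  destruct psi_junctions as (P1q & _).
  assert (Eleft : d = dalpha (l / 4)).
  { apply (deriv_within_agree (Icc 0 (l / 4)) F alpha (l / 4)); auto.
    - apply limpt_Icc; unfold Icc; lra.
    - unfold Icc; lra.
    - apply alpha_deriv. unfold Icc; lra.
    - intros s Hs. unfold Icc in Hs. destruct (Req_dec s (l / 4)) as [-> | Hs0].
      + unfold F. rewrite periodic_quarters_1, P1q by lra. apply Rf1_fixed_iff. exact H1.
      + apply periodic_quarters_0; lra. }
  assert (Eright : d = vscale (-1) (Rf1 (dalpha (psi1 l (l / 4))))).
  { apply (deriv_within_agree (Icc (l / 4) (3 * l / 8)) F (fun s => Rf1 (alpha (psi1 l s))) (l / 4));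
      auto.
    - apply limpt_Icc; unfold Icc; lra.
    - unfold Icc; lra.
    - apply (deriv_within_subset (Icc (l / 4) (l / 2))); [unfold Icc; intros; lra|].
      apply reflected_pieces_deriv. unfold Icc; lra.
    - intros s Hs. unfold Icc in Hs. apply periodic_quarters_1; lra. }
  rewrite P1q in Eright. congruence.
Qed.

Hypothesis dalpha_cont : cont_on (Icc 0 (l / 4)) dalpha.

Lemma C1_circle_gcurve :
  C1_circle l (gcurve l alpha) <->
  in_line e3 (alpha 0) /\ in_line e1 (alpha (l / 4)) /\
  in_span2 e1 e2 (dalpha 0) /\ in_span2 e2 e3 (dalpha (l / 4)).
Proof.
  split.
  - intros [dg [Hdg _]].
    assert (HC : C0_circle l (gcurve l alpha))
      by (intros t _; apply (deriv_within_cont _ _ _ (dg t)), Hdg; exact I).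
    destruct (proj1 C0_circle_gcurve HC) as [H3 H1].
    repeat split; auto.
    + apply (gcurve_deriv_at_0 (dg 0)); auto. apply Hdg. exact I.
    + apply (gcurve_deriv_at_quarter (dg (l / 4))); auto. apply Hdg. exact I.
  - intros (H3 & H1 & S12 & S23).
    destruct (gcurve_junctions H3 H1) as (J1 & J2 & J3 & J4).
    destruct (reflected_deriv_junctions dalpha S12 S23) as (J1' & J2' & J3' & J4').
    destruct reflected_pieces_deriv as (D1 & D2 & D3).
    destruct (reflected_pieces_cont (fun v => vscale (-1) (Rf1 v)) Rf2 (fun v => vscale (-1) (Rf3 v))
      dalpha) as (C1 & C2 & C3);
      auto using lin_isometry_opp, Rf1_isometry, Rf2_isometry, Rf3_isometry.
    exists (periodic_ext l (quarters l dalpha (fun t => vscale (-1) (Rf1 (dalpha (psi1 l t))))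
      (fun t => Rf2 (dalpha (psi2 l t))) (fun t => vscale (-1) (Rf3 (dalpha (psi3 l t)))))).
    split.
    + intros t _. rewrite gcurve_quarters. apply periodic_quarters_deriv; auto.
    + apply periodic_quarters_cont; auto.
Qed.

End Derivative.
End Gcurve.

Theorem lemma3p5 (l : R) (alpha : R -> V3) (La : R) :
  0 < l ->
  cont_on (Icc 0 (l / 4)) alpha ->
  length_on alpha (Icc 0 (l / 4)) = Finite La ->
  0 < La ->
  glength l (gcurve l alpha) = Finite (4 * La)
  /\ (C0_circle l (gcurve l alpha) <->
        in_line e3 (alpha 0) /\ in_line e1 (alpha (l / 4)))
  /\ (forall dalpha : R -> V3,
        C1_on_with (Icc 0 (l / 4)) alpha dalpha ->
        (C1_circle l (gcurve l alpha) <->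
           in_line e3 (alpha 0) /\ in_line e1 (alpha (l / 4))
           /\ in_span2 e1 e2 (dalpha 0) /\ in_span2 e2 e3 (dalpha (l / 4)))).
Proof.
  intros Hl Hcont HL _. split; [|split].
  - apply glength_gcurve; assumption.
  - apply C0_circle_gcurve; assumption.
  - intros dalpha [Dalpha Cdalpha]. apply C1_circle_gcurve; assumption.
Qed.
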